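(* Let $X,Y$ be totally ordered alphabets. The linear map $\Phi_\bullet(X,Y):\mathbf{H}_\mathrm{Pack}\to\mathbf{A}_{X,Y}$, $M\mapsto\Phi_M(X,Y)$, is injective if and only if both $X$ and $Y$ are infinite.
   Context: A totally ordered alphabet is a finite or countable set with a total order. For totally ordered alphabets $X,Y$, $\mathbf{A}_{X,Y}=\mathbb{Q}[[t_{i,j}\mid i\in X,\ j\in Y]]$ (commuting indeterminates). A packed matrix is a matrix with entries in $\mathbb{N}$ with no zero row and no zero column (the empty matrix $1$ is packed); $\mathrm{Pack}$ is their set and $\mathbf{H}_\mathrm{Pack}$ the $\mathbb{Q}$-vector space with basis $\mathrm{Pack}$. For $M=(m_{r,s})\in\mathrm{Pack}$ with $k$ rows and $l$ columns, $\Phi_M(X,Y)=\sum_{i_1<\dots<i_k\in X,\ j_1<\dots<j_l\in Y}\prod_{r=1}^k\prod_{s=1}^l t_{i_r,j_s}^{m_{r,s}}$ ($\Phi_1=1$), extended linearly. *)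

From HB Require Import structures.
From mathcomp Require Import all_boot all_order all_algebra.
From mathcomp Require Import finmap.
From Stdlib Require Import ClassicalEpsilon.
Set Implicit Arguments. Unset Strict Implicit. Unset Printing Implicit Defensive.
Import Order.TTheory GRing.Theory Num.Theory.

(* A totally ordered alphabet: a type with a total order (orderType) which is
   finite or countable, i.e. injects into nat. *)
Definition alphabet_countable (T : Type) : Prop :=
  exists f : T -> nat, injective f.

Definition infinite_type (T : eqType) : Prop :=
  forall s : seq T, exists x : T, x \notin s.

Definition natMatrix := {kl : nat * nat & 'M[nat]_(kl.1, kl.2)}.

(* packed: no zero row and no zero column (the empty 0x0 matrix is packed). *)
Definition packedb (A : natMatrix) : bool :=
  let M := tagged A in
  [forall r, [exists s, M r s != 0%N]] && [forall s, [exists r, M r s != 0%N]].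

Definition Pack := {A : natMatrix | packedb A}.

(* H_Pack : the Q-vector space with basis Pack = finitely supported
   functions Pack -> Q. *)
Definition HPack := {fsfun Pack -> rat with 0%R}.

(* A_{X,Y} = Q[[t_{i,j}]] : a series is given by its coefficient function on
   monomials; a monomial prod t_{x,y}^{e x y} is encoded by its exponent
   function e (series are compared coefficientwise). *)
Definition series (X Y : Type) := (X -> Y -> nat) -> rat.

Section Phi.
Context {dX dY : Order.disp_t} {X : orderType dX} {Y : orderType dY}.

Definition strictly_increasing (k : nat) {d} {T : orderType d} (i : 'I_k -> T) :=
  forall r s : 'I_k, (r < s)%N -> (i r < i s)%O.

(* exponent of t_{x,y} in prod_r prod_s t_{i_r, j_s}^{m_{r,s}} *)
Definition mono_of (k l : nat) (i : 'I_k -> X) (j : 'I_l -> Y)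
  (M : 'M[nat]_(k, l)) : X -> Y -> nat :=
  fun x y => (\sum_(r < k) \sum_(s < l) ((i r == x) && (j s == y)) * M r s)%N.

(* coefficient of the monomial e in Phi_M(X,Y): the monomials of the defining
   sum are pairwise distinct for packed M, so the coefficient is 1 if e arises
   from some increasing i_1<..<i_k, j_1<..<j_l and 0 otherwise. *)
Definition Phi (A : Pack) : series X Y :=
  fun e =>
    let: existT kl M := val A in
    if excluded_middle_informative
         (exists (i : 'I_kl.1 -> X) (j : 'I_kl.2 -> Y),
            strictly_increasing i /\ strictly_increasing j /\
            mono_of i j M = e)
    then 1%R else 0%R.

Definition Phi_lin (f : HPack) : series X Y :=
  fun e => (\sum_(A <- finsupp f) f A * Phi A e)%R.

Definition Phi_injective : Prop :=
  forall f g : HPack, (forall e, Phi_lin f e = Phi_lin g e) -> f = g.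
End Phi.

From mathcomp Require Import all_boot all_order all_algebra finmap.
From Stdlib Require Import Classical ClassicalEpsilon.
Set Implicit Arguments. Unset Strict Implicit. Unset Printing Implicit Defensive.
Import Order.TTheory GRing.Theory Num.Theory.

(* Let M be packed and i_1 < ... < i_k, j_1 < ... < j_l.  Since M has no zero
   row or column, the letters occurring in m = prod t_{i_r,j_s}^{M_{r,s}} are
   exactly the i_r and the j_s, so m determines i, j and then M.  Hence Phi_M
   is the only Phi_N containing m, and the coefficient of m in Phi(f) is the
   coefficient of M in f; when X and Y are infinite such i, j exist for every
   M, which gives injectivity.  Conversely Phi of the identity matrix of size
   k vanishes unless X and Y both contain increasing sequences of length k. *)

Section StrictlyIncreasing.
Context {d : Order.disp_t} {T : orderType d}.

Lemma sinc_inj k (i : 'I_k -> T) : strictly_increasing i -> injective i.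
Proof.
move=> inc_i r s eq_rs; apply/val_inj; case: (ltngtP r s) => // [/inc_i|/inc_i];
  by rewrite eq_rs ltxx.
Qed.

Lemma sorted_codom_sinc k (i : 'I_k -> T) :
  strictly_increasing i -> sorted <%O (codom i).
Proof.
move=> inc_i; rewrite codomE sorted_map.
have : sorted (relpre val ltn) (enum 'I_k).
  by rewrite -sorted_map val_enum_ord iota_ltn_sorted.
by apply: sub_sorted => r s; apply: inc_i.
Qed.

Lemma sinc_eq_image k k' (i : 'I_k -> T) (i' : 'I_k' -> T) :
  strictly_increasing i -> strictly_increasing i' -> codom i =i codom i' ->
  exists e : k = k', forall r, i r = i' (cast_ord e r).
Proof.
move=> inc_i inc_i' eq_img.
have eq_codom :=
  lt_sorted_eq (sorted_codom_sinc inc_i) (sorted_codom_sinc inc_i') eq_img.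
have eq_k : k = k'.
  by rewrite -(card_ord k) -(card_ord k') -(size_codom i) -(size_codom i') eq_codom.
exists eq_k => r; subst k'; rewrite cast_ord_id.
have := congr1 (nth (i r) ^~ r) eq_codom.
by rewrite !codomE !(nth_map r) -?enumT ?fintype.nth_ord_enum ?size_enum_ord.
Qed.

Lemma infinite_typeP :
  infinite_type T <-> forall k, exists i : 'I_k -> T, strictly_increasing i.
Proof.
split=> [infT k | sincT s].
- have [s [uniq_s size_s]] : exists s : seq T, uniq s /\ size s = k.
    elim: k => [|k [s [uniq_s size_s]]]; first by exists [::].
    by have [x xNs] := infT s; exists (x :: s); rewrite /= xNs uniq_s size_s.
  have [x0 _] := infT [::].
  have sorted_s : sorted <%O (sort <=%O s).
    by rewrite lt_sorted_uniq_le sort_uniq uniq_s sort_sorted //; apply: le_total.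
  exists (fun r => nth x0 (sort <=%O s) r) => r r' lt_rr'.
  by apply: (sorted_ltn_nth lt_trans); rewrite // inE size_sort size_s.
- have [i inc_i] := sincT (size s).+1.
  have uniq_i : uniq (codom i).
    by rewrite codomE map_inj_uniq ?enum_uniq //; apply: sinc_inj.
  have /allPn[x _ xNs] : ~~ all (mem s) (codom i).
    by apply/negP => /allP/(uniq_leq_size uniq_i); rewrite size_codom card_ord ltnn.
  by exists x.
Qed.

End StrictlyIncreasing.

Definition packed_mx k l (M : 'M[nat]_(k, l)) : natMatrix :=
  existT (fun kl : nat * nat => 'M[nat]_(kl.1, kl.2)) (k, l) M.

Lemma packed_mxP k l (M : 'M[nat]_(k, l)) :
  reflect ((forall r, exists s, M r s != 0%N) /\ (forall s, exists r, M r s != 0%N))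
          (packedb (packed_mx M)).
Proof.
apply: (iffP andP) => [[/forallP rowsM /forallP colsM] | [rowsM colsM]].
  by split=> [r|s]; apply/existsP.
by split; apply/forallP => r; apply/existsP.
Qed.

Lemma packed_mx1 k : packedb (packed_mx (1%:M : 'M[nat]_k)%R).
Proof. by apply/packed_mxP; split=> r; exists r; rewrite mxE eqxx. Qed.

Section Monomial.
Context {dX dY : Order.disp_t} {X : orderType dX} {Y : orderType dY}.
Variables (k l : nat) (i : 'I_k -> X) (j : 'I_l -> Y) (M : 'M[nat]_(k, l)).
Hypotheses (inc_i : strictly_increasing i) (inc_j : strictly_increasing j).

Lemma mono_of_sinc r s : mono_of i j M (i r) (j s) = M r s.
Proof.
rewrite /mono_of (bigD1 r) //= (bigD1 s) //= !eqxx mul1n.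
rewrite big1 ?addn0 => [|s' s'Ns]; last first.
  by rewrite (inj_eq (sinc_inj inc_j)) (negbTE s'Ns) andbF.
rewrite big1 ?addn0 // => r' r'Nr; apply: big1 => s' _.
by rewrite (inj_eq (sinc_inj inc_i)) (negbTE r'Nr).
Qed.

Lemma mem_codom_row x : (forall r, exists s, M r s != 0%N) ->
  x \in codom i <-> exists y, mono_of i j M x y != 0%N.
Proof.
move=> rowsM; split=> [/codomP[r ->] | [y]].
  by have [s Mrs] := rowsM r; exists (j s); rewrite mono_of_sinc.
apply: contra_neqT => xNi; apply: big1 => r _; apply: big1 => s _.
suff -> : (i r == x) = false by [].
by apply: contraNF xNi => /eqP <-; apply: codom_f.
Qed.

Lemma mem_codom_col y : (forall s, exists r, M r s != 0%N) ->
  y \in codom j <-> exists x, mono_of i j M x y != 0%N.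
Proof.
move=> colsM; split=> [/codomP[s ->] | [x]].
  by have [r Mrs] := colsM s; exists (i r); rewrite mono_of_sinc.
apply: contra_neqT => yNj; apply: big1 => r _; apply: big1 => s _.
suff -> : (j s == y) = false by rewrite andbF.
by apply: contraNF yNj => /eqP <-; apply: codom_f.
Qed.

End Monomial.

Local Open Scope ring_scope.

Section PhiMonomial.
Context {dX dY : Order.disp_t} {X : orderType dX} {Y : orderType dY}.

Lemma mono_of_packed_inj k l k' l' (M : 'M[nat]_(k, l)) (M' : 'M[nat]_(k', l'))
    (i : 'I_k -> X) (j : 'I_l -> Y) (i' : 'I_k' -> X) (j' : 'I_l' -> Y) :
  packedb (packed_mx M) -> packedb (packed_mx M') ->
  strictly_increasing i -> strictly_increasing j ->
  strictly_increasing i' -> strictly_increasing j' ->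
  mono_of i j M = mono_of i' j' M' -> packed_mx M = packed_mx M'.
Proof.
move=> /packed_mxP[rowsM colsM] /packed_mxP[rowsM' colsM'].
move=> inc_i inc_j inc_i' inc_j' eqM.
have eq_rows : codom i =i codom i'.
  move=> x; have := mem_codom_row inc_i inc_j x rowsM.
  have := mem_codom_row inc_i' inc_j' x rowsM'.
  by rewrite eqM => iff' iff; apply/idP/idP => [/iff/iff' | /iff'/iff].
have eq_cols : codom j =i codom j'.
  move=> y; have := mem_codom_col inc_i inc_j y colsM.
  have := mem_codom_col inc_i' inc_j' y colsM'.
  by rewrite eqM => iff' iff; apply/idP/idP => [/iff/iff' | /iff'/iff].
have [eq_k eq_i] := sinc_eq_image inc_i inc_i' eq_rows.
have [eq_l eq_j] := sinc_eq_image inc_j inc_j' eq_cols.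
subst k' l'; congr packed_mx; apply/matrixP => r s.
by rewrite -(mono_of_sinc M inc_i inc_j) eqM eq_i eq_j !cast_ord_id mono_of_sinc.
Qed.

Section PhiMonomialCoef.
Variables (k l : nat) (M : 'M[nat]_(k, l)) (packed_M : packedb (packed_mx M)).
Variables (i : 'I_k -> X) (j : 'I_l -> Y).
Hypotheses (inc_i : strictly_increasing i) (inc_j : strictly_increasing j).

Let A : Pack := exist _ (packed_mx M) packed_M.

Lemma Phi_mono_of (B : Pack) : Phi B (mono_of i j M) = (B == A)%:R.
Proof.
have [-> | neqBA] := eqVneq B A.
  by rewrite /Phi /=; case: excluded_middle_informative => // -[]; exists i, j.
move: B neqBA => [[[k' l'] M'] packed_M'] neqBA.
rewrite /Phi /=; case: excluded_middle_informative => // -[i' [j' [inc_i' [inc_j' eqM]]]].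
case/eqP: neqBA; apply: val_inj.
exact: (mono_of_packed_inj packed_M' packed_M inc_i' inc_j' inc_i inc_j eqM).
Qed.

Lemma Phi_lin_mono_of (f : HPack) : Phi_lin f (mono_of i j M) = f A.
Proof.
rewrite /Phi_lin; under eq_bigr => B _ do rewrite Phi_mono_of.
have [A_supp | A_nsupp] := boolP (A \in finsupp f).
  rewrite (bigD1_seq A) ?fset_uniq //= eqxx mulr1 big1 ?addr0 // => B /negbTE ->.
  by rewrite mulr0.
rewrite fsfun_dflt // big1_seq // => B B_supp.
by rewrite (_ : B == A = false) ?mulr0 //; apply: contraNF A_nsupp => /eqP <-.
Qed.

End PhiMonomialCoef.
End PhiMonomial.

Section Injectivity.
Context {dX dY : Order.disp_t} {X : orderType dX} {Y : orderType dY}.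

Lemma Phi_injective_neq0 :
  @Phi_injective dX dY X Y -> forall A : Pack, exists e, @Phi dX dY X Y A e != 0.
Proof.
move=> inj A; apply: NNPP => Phi_A_eq0.
have Phi_A0 (e : X -> Y -> nat) : Phi A e = 0.
  by apply/eqP; apply: contraT => Phi_A_neq0; case: Phi_A_eq0; exists e.
pose indicator_A : HPack := [fsfun B in [fset A]%fset => 1 | 0].
have /(congr1 (fun f : HPack => f A)) : indicator_A = [fsfun].
  apply: inj => e; rewrite /Phi_lin [RHS]big1_seq => [|B _]; last first.
    by rewrite fsfunE mul0r.
  rewrite big1_seq // => B _; rewrite fsfunE.
  by case: ifP => [/fset1P -> | _]; rewrite ?Phi_A0 ?mulr0 ?mul0r.
by rewrite !fsfunE fset11; apply/eqP; rewrite oner_eq0.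
Qed.

Lemma Phi_injective_sinc : @Phi_injective dX dY X Y ->
  forall k, exists (i : 'I_k -> X) (j : 'I_k -> Y),
    strictly_increasing i /\ strictly_increasing j.
Proof.
move=> inj k.
have [e] := Phi_injective_neq0 inj (exist (fun A => packedb A) _ (packed_mx1 k)).
rewrite /Phi /=; case: excluded_middle_informative => // -[i [j [inc_i [inc_j _]]]] _.
by exists i, j.
Qed.

Lemma Phi_lin_separates (A : Pack) :
  (forall k, exists i : 'I_k -> X, strictly_increasing i) ->
  (forall l, exists j : 'I_l -> Y, strictly_increasing j) ->
  exists e : X -> Y -> nat, forall f : HPack, Phi_lin f e = f A.
Proof.
case: A => [[[k l] M] packed_M] sincX sincY.
have [i inc_i] := sincX k; have [j inc_j] := sincY l.
by exists (mono_of i j M) => f; apply: Phi_lin_mono_of.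
Qed.

End Injectivity.

Theorem mainTheorem12 (dX dY : Order.disp_t) (X : orderType dX) (Y : orderType dY)
  (hX : alphabet_countable X) (hY : alphabet_countable Y) :
  @Phi_injective dX dY X Y <-> (infinite_type X /\ infinite_type Y).
Proof.
rewrite !infinite_typeP; split=> [inj | [sincX sincY] f g eq_Phi_fg].
  split=> k; have [i [j [inc_i inc_j]]] := Phi_injective_sinc inj k.
  - by exists i.
  - by exists j.
apply/fsfunP => A; have [e Phi_e] := Phi_lin_separates A sincX sincY.
by rewrite -!Phi_e eq_Phi_fg.
Qed.
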